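(* Let $R$ be a unital commutative Hausdorff topological $\mathbb Q$-algebra with dense group of units which is locally $k_\omega$, and let $E,F\in\mathrm{TopSMod}^{lko}_R$. Let $U\subset E_\infty$ be DeWitt-open and let $f:U\to F^\infty$ be even and Tuynman-$\mathcal C^2$. Then $f_R=f|_{U_R}:U_R\to F$ is $\mathcal C^1$ over $R$, and there exists a DeWitt-continuous extension $f^{(1)}:U\times E^\infty\to F^\infty$ of $df_R$ such that for every $x\in U$ the map $f^{(1)}(x)=f^{(1)}(x,\cdot)$ is even and $\lambda^\infty$-linear and $$f(x+a)-f(x)=f^{(1)}(x)(a)\quad\text{for all }x\in U,\ p\ge1,\ a\in\underline E(\lambda^\infty\theta_p).$$
   Context: $\lambda^n=R[\theta_1,\dots,\theta_n]$, $\lambda^\infty=R[\theta_i:i\in\mathbb N]$ Grassmann algebras on odd generators ($\lambda^n=\bigoplus_IR\theta_I$ product topology, $\lambda^\infty$ direct limit topology); $\varepsilon:\lambda\to R$ kills all $\theta_i$, $\lambda^+=\ker\varepsilon$. For a Hausdorff graded topological $R$-module $E=E_0\oplus E_1$: $E\otimes\lambda^N=\prod_{|I|\le N}E\theta_I$ (product topology), $E^\infty=E\otimes\lambda^\infty=\varinjlim_NE\otimes\lambda^N$ in Top, $E_\infty=(E\otimes\lambda^\infty)_0$, $\underline E(\lambda^\infty\theta_p)=(E\otimes\lambda^\infty\theta_p)_0$. $\mathrm{TopSMod}^{lko}_R$: such $E$ that are locally $k_\omega$ (Hausdorff, every point has an open neighbourhood which is a topological direct limit of an increasing sequence of compact subsets).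 DeWitt topology on $E^\infty$ (resp. $E_\infty$): coarsest topology making $\mathrm{id}\otimes\varepsilon$ to $E$ (resp. $E_0$) continuous. A map $g:V\to F^\infty$ with $V\subset E_\infty$ is even if $g(V)\subset F_\infty$. $\mathcal C^1$ over $R$ is in the Bertram–Glöckner–Neeb sense ($g(x+tv)-g(x)=t\,g^{[1]}(x,v,t)$ with $g^{[1]}$ continuous on $\{(x,v,t):x,x+tv\in V,t\in R\}$; $dg(x)v=g^{[1]}(x,v,0)$). Tuynman-$\mathcal C^k$: a subset $V\subset E^\infty$ is nilsaturated if $x+n\in V$ for all $x\in V$, $n\in N_V=\langle V\rangle_R\cap(E\otimes\lambda^{\infty+})$ ($\langle V\rangle_R$ the $R$-linear span); then $V=V_R+N_V$ with $V_R=V\cap E$ (DeWitt-open subsets of $E_\infty$ are nilsaturated). A map $g:V\to F^\infty$ is grounded if $g(V_R)\subset F$. For nilsaturated $V$, $V^{[1]}=\{(x,v,t)\in V\times E^\infty\times\lambda^\infty:x+vt\in V\}$ is nilsaturated in $E^\infty\times E^\infty\times\lambda^\infty=(E\times E\times R)\otimes\lambda^\infty$. A grounded, DeWitt-continuous $g:V\to F^\infty$ is Tuynman-$\mathcal C^1$ if there is a grounded, DeWitt-continuous $g^{[1]}:V^{[1]}\to F^\infty$ with $g(x+vt)-g(x)=g^{[1]}(x,v,t)\cdot t$ for all $(x,v,t)\in V^{[1]}$; it is Tuynman-$\mathcal C^{k+1}$ if in addition $g^{[1]}$ is Tuynman-$\mathcal C^k$. *)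

From HB Require Import structures.
From mathcomp Require Import all_boot all_order all_algebra finmap.
From mathcomp Require Import all_classical all_reals topology.

Set Implicit Arguments.
Unset Strict Implicit.
Unset Printing Implicit Defensive.

Import GRing.Theory.
Local Open Scope classical_set_scope.
Local Open Scope ring_scope.


(** * Topological algebraic carriers (no continuity axioms: these are
      stated separately as predicates) *)
HB.structure Definition TopNmod := {M of GRing.Nmodule M & Topological M}.
HB.structure Definition TopZmod := {M of GRing.Zmodule M & Topological M}.
HB.structure Definition TopLmod (R : pzRingType) :=
  {M of GRing.Lmodule R M & Topological M}.
HB.structure Definition TopComUnitRing :=
  {R of GRing.ComUnitRing R & Topological R}.
HB.saturate prod.

Definition topological_ring (R : TopComUnitRing.type) : Prop :=
  [/\ continuous (fun p : R * R => p.1 + p.2),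
      continuous (fun x : R => - x) &
      continuous (fun p : R * R => p.1 * p.2)].

Definition topological_module (R : TopComUnitRing.type) (M : TopLmod.type R) : Prop :=
  [/\ continuous (fun p : M * M => p.1 + p.2),
      continuous (fun x : M => - x) &
      continuous (fun p : R * M => p.1 *: p.2)].

Definition Q_algebra (R : comUnitRingType) : Prop :=
  forall n : nat, (0 < n)%N -> (n%:R : R) \is a GRing.unit.

Definition dense_units (R : TopComUnitRing.type) : Prop :=
  forall O : set R, open O -> O !=set0 ->
    exists2 u : R, O u & u \is a GRing.unit.

(** locally k_omega: Hausdorff, and every point has an open neighbourhood
    which is the topological direct limit of an increasing sequence of
    compact subsets *)
Definition locally_komega (T : topologicalType) : Prop :=
  hausdorff_space T /\
  forall x : T, exists W : set T, [/\ open W, W x &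
    exists K : nat -> set T,
      [/\ (forall n, compact (K n)),
          (forall n, K n `<=` K n.+1),
          W = \bigcup_n K n &
          (forall A : set T, A `<=` W ->
             (forall n, exists O : set T, open O /\ A `&` K n = O `&` K n) ->
             open A)]].

(** * Grassmann algebra lambda^infty and E (x) lambda^infty
    Generator theta_(i+1) is indexed by i : nat; a monomial theta_I is
    indexed by I : {fset nat} (with increasing order of factors). *)

(** number of inversions i in I, j in J, j < i : theta_I theta_J =
    (-1)^(inv I J) theta_(I u J) when I, J are disjoint *)
Definition inv_count (I J : {fset nat}) : nat :=
  \sum_(i <- I) count (fun j => (j < i)%N) J.

(** elements of lambda^infty and of E (x) lambda^infty, as coefficient
    functions (finite support is imposed separately by [fin_supp]) *)
Notation Lam R := ({fset nat} -> R) (only parsing).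
Notation Sinf M := ({fset nat} -> M) (only parsing).

Definition fin_supp (V : Type) (z : V) (x : {fset nat} -> V) : Prop :=
  exists N : nat, forall I : {fset nat},
    (exists2 i, i \in I & (N <= i)%N) -> x I = z.

Definition lam_fin (R : pzRingType) (t : Lam R) := fin_supp 0 t.
Definition sup_fin (R : pzRingType) (M : lmodType R) (x : Sinf M) := fin_supp 0 x.

Definition lam_mul (R : pzRingType) (t s : Lam R) : Lam R := fun K =>
  \sum_(I <- fpowerset K) (-1) ^+ inv_count I ((K `\` I)%fset) * t I * s ((K `\` I)%fset).

(** right action of lambda^infty on E (x) lambda^infty:
    (e theta_I) . (r theta_J) = (r e) theta_I theta_J *)
Definition sup_act (R : pzRingType) (M : lmodType R) (x : Sinf M) (t : Lam R)
  : Sinf M := fun K =>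
  \sum_(I <- fpowerset K) ((-1) ^+ inv_count I ((K `\` I)%fset) * t ((K `\` I)%fset)) *: x I.

Definition sup_add (R : pzRingType) (M : lmodType R) (x y : Sinf M) : Sinf M :=
  fun I => x I + y I.
Definition sup_sub (R : pzRingType) (M : lmodType R) (x y : Sinf M) : Sinf M :=
  fun I => x I - y I.

Definition sup_body (R : pzRingType) (M : lmodType R) (x : Sinf M) : M := x fset0.
Definition sup_emb (R : pzRingType) (M : lmodType R) (e : M) : Sinf M :=
  fun I => if I == fset0 then e else 0.
Definition sup_ground (R : pzRingType) (M : lmodType R) (x : Sinf M) : Prop :=
  forall I : {fset nat}, I != fset0 -> x I = 0.
Definition lam_ground (R : pzRingType) (t : Lam R) : Prop :=
  forall I : {fset nat}, I != fset0 -> t I = 0.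

(** the generator theta_(p+1) *)
Definition theta (R : pzRingType) (p : nat) : Lam R :=
  fun I => if I == [fset p]%fset then 1 else 0.

(** even elements of (E0 x E1) (x) lambda^infty (finite support is
    imposed separately): coefficient of theta_I lies in E_(|I| mod 2) *)
Definition sup_even (R : pzRingType) (M0 M1 : lmodType R) (x : Sinf (M0 * M1)%type)
  : Prop :=
  forall I : {fset nat}, if odd #|` I| then (x I).1 = 0 else (x I).2 = 0.

(** * Abstract "super space" data used to define Tuynman-C^k recursively:
    a carrier (standing for (E1 x ... x En) (x) lambda^infty), its body map
    into a topological space, addition, right lambda-action, the grounded
    elements and the finitely supported elements. *)
Record sspace (R : TopComUnitRing.type) := SSpace {
  scar : choiceType;
  sbt : topologicalType;
  sbody : scar -> sbt;
  sadd : scar -> scar -> scar;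
  sact : scar -> Lam R -> scar;
  sground : set scar;
  sfin : set scar }.

Definition sspE (R : TopComUnitRing.type) (M : TopLmod.type R) : sspace R :=
  @SSpace R ({fset nat} -> M : choiceType) M (@sup_body R M) (@sup_add R M)
    (@sup_act R M) (@sup_ground R M) (@sup_fin R M).

(** (X x X x R) (x) lambda^infty = X^infty x X^infty x lambda^infty *)
Definition sspP3 (R : TopComUnitRing.type) (D : sspace R) : sspace R :=
  @SSpace R (scar D * scar D * ({fset nat} -> R : choiceType))%type
    (sbt D * sbt D * R)%type
    (fun y => (sbody y.1.1, sbody y.1.2, y.2 fset0))
    (fun y z => (sadd y.1.1 z.1.1, sadd y.1.2 z.1.2, fun I => y.2 I + z.2 I))
    (fun y t => (sact y.1.1 t, sact y.1.2 t, lam_mul y.2 t))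
    (fun y => [/\ sground y.1.1, sground y.1.2 & lam_ground y.2])
    (fun y => [/\ sfin y.1.1, sfin y.1.2 & lam_fin y.2]).

Definition V1 (R : TopComUnitRing.type) (D : sspace R) (V : set (scar D))
  : set (scar (sspP3 D)) :=
  fun y => [/\ V y.1.1, sfin y.1.2, lam_fin y.2 & V (sadd y.1.1 (sact y.1.2 y.2))].

(** DeWitt topology = initial topology of the body map *)
Definition DeWitt_continuous (R : TopComUnitRing.type) (D : sspace R)
  (F : TopLmod.type R) (V : set (scar D)) (g : scar D -> Sinf F) : Prop :=
  {within (V : set (initial_topology (@sbody R D))),
     continuous (g : initial_topology (@sbody R D) ->
                     initial_topology (@sup_body R F))}.

Fixpoint TuynmanC (R : TopComUnitRing.type) (F : TopLmod.type R) (k : nat)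
  (D : sspace R) (V : set (scar D)) (g : scar D -> Sinf F) {struct k} : Prop :=
  [/\ (forall x, V x -> sup_fin (g x)),
      (forall x, V x -> @sground R D x -> sup_ground (g x)),
      DeWitt_continuous V g &
      match k with
      | 0 => True
      | k'.+1 => exists g1 : scar (sspP3 D) -> Sinf F,
          (forall y, V1 V y ->
             sup_sub (g (sadd y.1.1 (sact y.1.2 y.2))) (g y.1.1)
             = sup_act (g1 y) y.2)
          /\ TuynmanC k' (V1 V) g1
      end].

(** C^1 over R in the Bertram-Gloeckner-Neeb sense, for h : W -> N,
    W subset of M; h1 is the witness f^[1]. *)
Definition BGN_C1_with (R : TopComUnitRing.type) (M N : TopLmod.type R)
  (W : set M) (h : M -> N) (h1 : M * M * R -> N) : Prop :=
  [/\ {within W, continuous h},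
      {within [set y : M * M * R | W y.1.1 /\ W (y.1.1 + y.2 *: y.1.2)],
         continuous h1} &
      forall x v t, W x -> W (x + t *: v) -> h (x + t *: v) - h x = t *: h1 (x, v, t)].

(** body map of M (x) lambda^infty viewed as landing in the topological space M *)
Definition dwbody (R : TopComUnitRing.type) (M : TopLmod.type R) (x : Sinf M) : M :=
  sup_body x.

(** DeWitt continuity for maps defined on subsets of E^infty x E^infty
    (DeWitt topology of (E x E) (x) lambda^infty = product of the DeWitt
    topologies) *)
Definition DeWitt_continuous2 (R : TopComUnitRing.type) (M N : TopLmod.type R)
  (W : set (Sinf M * Sinf M)) (g : Sinf M * Sinf M -> Sinf N) : Prop :=
  {within (W : set (initial_topology (@dwbody R M) * initial_topology (@dwbody R M))%type),
     continuous (g : (initial_topology (@dwbody R M) *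
                      initial_topology (@dwbody R M))%type ->
                     initial_topology (@dwbody R N))}.

From HB Require Import structures.
From mathcomp Require Import all_boot all_order all_algebra finmap.
From mathcomp Require Import all_classical all_reals topology.
From mathcomp Require Import ring.
Import GRing.Theory.
Local Open Scope classical_set_scope.
Local Open Scope ring_scope.

Set Implicit Arguments.
Unset Strict Implicit.
Unset Printing Implicit Defensive.

(* Let f^[1] be the first Tuynman difference quotient of f and [tdiff x v := f^[1](x, v, 0)].
   The C^2 identity for f^[1] gives f^[1](x, v, u) u = tdiff x v u whenever u is a multiple of a
   single generator theta_q, since the second-order term then carries the factor u u = 0; thus
   f(x + v u) - f(x) = tdiff x v u for such u.  Taking for u a monomial of the parity of v in
   generators beyond the support of everything involved, u can be cancelled again, and comparing
   increments along v, w and v + w (resp. v and v s) shows that tdiff x is additive,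
   lambda-linear and parity preserving on homogeneous arguments.  The derivative f^(1)(x, a) is
   tdiff x applied to the even and odd parts of a.  At grounded points f^[1] is the BGN
   difference quotient of f_R, and every continuity claim is inherited from the DeWitt
   continuity of f and f^[1]. *)

Definition supported_below (V : zmodType) (N : nat) (x : {fset nat} -> V) :=
  forall I : {fset nat}, (exists2 i, i \in I & (N <= i)%N) -> x I = 0.

(* [u] is a multiple of [theta _ q]: only monomials containing [q] occur *)
Definition theta_divisible (V : zmodType) (q : nat) (u : {fset nat} -> V) :=
  forall I, q \notin I -> u I = 0.

Definition lam_emb (R : pzRingType) (t : R) : {fset nat} -> R :=
  fun I => if I == fset0 then t else 0.

Lemma supported_below_maxl (V : zmodType) N N' (x : {fset nat} -> V) :
  supported_below N x -> supported_below (maxn N N') x.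
Proof. by move=> h I [i iI Ni]; apply: h; exists i => //; exact: leq_trans (leq_maxl _ _) Ni. Qed.

Lemma supported_below_maxr (V : zmodType) N N' (x : {fset nat} -> V) :
  supported_below N' x -> supported_below (maxn N N') x.
Proof. by rewrite maxnC; exact: supported_below_maxl. Qed.

Lemma supported_belowD (V : zmodType) N (x y : {fset nat} -> V) :
  supported_below N x -> supported_below N y -> supported_below N (x + y).
Proof. by move=> hx hy I hI; rewrite addrfctE /= hx ?hy ?addr0. Qed.

Lemma supported_belowN (V : zmodType) N (x : {fset nat} -> V) :
  supported_below N x -> supported_below N (- x).
Proof. by move=> hx I hI; rewrite opprfctE /= hx ?oppr0. Qed.

Lemma fin_suppD (V : zmodType) (x y : {fset nat} -> V) :
  fin_supp 0 x -> fin_supp 0 y -> fin_supp 0 (x + y).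
Proof.
move=> [N hx] [N' hy]; exists (maxn N N').
by apply: supported_belowD; [exact: supported_below_maxl | exact: supported_below_maxr].
Qed.

Lemma fin_suppB (V : zmodType) (x y : {fset nat} -> V) :
  fin_supp 0 x -> fin_supp 0 y -> fin_supp 0 (x - y).
Proof. by move=> fx [N hy]; apply: fin_suppD fx _; exists N; exact: supported_belowN. Qed.

Lemma fin_supp0 (V : zmodType) : fin_supp 0 (0 : {fset nat} -> V).
Proof. by exists 0%N. Qed.

Lemma lam_emb_fin (R : pzRingType) (t : R) : lam_fin (lam_emb t).
Proof. by exists 0%N => I [i iI _]; rewrite /lam_emb; case: eqP => // I0; rewrite I0 inE in iI. Qed.

Lemma sup_emb_fin (R : pzRingType) (M : lmodType R) (e : M) : sup_fin (sup_emb e).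
Proof. by exists 0%N => I [i iI _]; rewrite /sup_emb; case: eqP => // I0; rewrite I0 inE in iI. Qed.

Lemma theta_supported_below (R : pzRingType) q : supported_below q.+1 (theta R q).
Proof.
move=> I [i iI qi]; rewrite /theta; case: eqP => // I1.
by move: iI qi; rewrite I1 inE => /eqP ->; rewrite ltnn.
Qed.

Lemma theta_fin (R : pzRingType) q : lam_fin (theta R q).
Proof. by exists q.+1; exact: theta_supported_below. Qed.

Lemma theta_divisible_theta (R : pzRingType) q : theta_divisible q (theta R q).
Proof. by move=> I qI; rewrite /theta; case: eqP => // I1; rewrite I1 fset11 in qI. Qed.

Lemma inv_count0l J : inv_count fset0 J = 0%N.
Proof. by rewrite /inv_count big_seq_fset0. Qed.

Lemma big_fsetU_disjoint (K : choiceType) (T : Type) (idx : T) (op : Monoid.com_law idx)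
  (A B : {fset K}) (F : K -> T) : [disjoint A & B]%fset ->
  \big[op/idx]_(x <- (A `|` B)%fset) F x =
  op (\big[op/idx]_(x <- A) F x) (\big[op/idx]_(x <- B) F x).
Proof.
move=> dAB; rewrite (big_fsetID op (mem A)); congr (op _ _); apply: eq_fbigl => x; rewrite !inE /=.
  by case: (x \in A); rewrite ?orbT ?andbF.
case: (boolP (x \in A)) => xA /=; last by rewrite andbT.
by apply/esym/negbTE; move/fdisjointP: dAB; apply.
Qed.

Lemma inv_countUl (I A B : {fset nat}) : [disjoint I & A]%fset ->
  inv_count (I `|` A)%fset B = (inv_count I B + inv_count A B)%N.
Proof. by move=> d; rewrite /inv_count big_fsetU_disjoint. Qed.

Lemma inv_countUr (I A B : {fset nat}) : [disjoint A & B]%fset ->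
  inv_count I (A `|` B)%fset = (inv_count I A + inv_count I B)%N.
Proof.
move=> d; rewrite /inv_count -big_split /=; apply: eq_bigr => i _.
by rewrite -!sum1_count !(big_mkcond (fun j => (j < i)%N)) big_fsetU_disjoint.
Qed.

Lemma eq_fsum (V : nmodType) (I : choiceType) (A : {fset I}) (F G : I -> V) :
  {in A, F =1 G} -> \sum_(i <- A) F i = \sum_(i <- A) G i.
Proof. by move=> h; apply: eq_fbigr => x xA _; exact: h. Qed.

Lemma sum_fpowerset_sub (V : nmodType) (K J : {fset nat}) (G : {fset nat} -> V) :
  (J `<=` K)%fset ->
  \sum_(I <- fpowerset J) G I = \sum_(I <- fpowerset K) (if (I `<=` J)%fset then G I else 0).
Proof.
move=> JK; rewrite (@eq_fsum _ _ _ _ (fun I => if (I `<=` J)%fset then G I else 0)); last first.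
  by move=> I; rewrite fpowersetE => ->.
apply: big_fset_incl; first by rewrite fpowersetS.
by move=> I _; rewrite fpowersetE => /negbTE ->.
Qed.

Lemma fsetUDK (A X : {fset nat}) : (A `<=` X)%fset -> (A `|` (X `\` A))%fset = X.
Proof.
move=> AX; apply/fsetP => z; rewrite !inE; case: (boolP (z \in A)) => zA //=.
by rewrite (fsubsetP AX).
Qed.

Lemma fsetUKD (I A : {fset nat}) : [disjoint I & A]%fset -> ((I `|` A) `\` I)%fset = A.
Proof.
move=> d; apply/fsetP => z; rewrite !inE; case: (boolP (z \in I)) => zI //=.
by apply/esym/negbTE; move/fdisjointP: d; apply.
Qed.

Lemma exchange_sum_fpowerset (V : nmodType) (K : {fset nat}) (F : {fset nat} -> {fset nat} -> V) :
  \sum_(J <- fpowerset K) \sum_(I <- fpowerset J) F I J =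
  \sum_(I <- fpowerset K) \sum_(A <- fpowerset (K `\` I)%fset) F I (I `|` A)%fset.
Proof.
rewrite (@eq_fsum _ _ _ _
    (fun J => \sum_(I <- fpowerset K) (if (I `<=` J)%fset then F I J else 0))); last first.
  by move=> J; rewrite fpowersetE => JK; rewrite (sum_fpowerset_sub _ JK).
rewrite exchange_big /=; apply: eq_fsum => I; rewrite fpowersetE => IK.
have inj : {in mem (fpowerset (K `\` I)%fset) &, injective (fun A => (I `|` A)%fset)}.
  move=> A B; rewrite !fpowersetE => AK BK /(congr1 (fun C => (C `\` I)%fset)).
  by rewrite !fsetUKD // fdisjoint_sym; [move: BK | move: AK]; rewrite fsubsetD => /andP[].
rewrite -(@big_imfset _ 0 +%R _ _ imfset_key (fun A => (I `|` A)%fset)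
  (mem (fpowerset (K `\` I)%fset)) (F I) inj).
apply/esym; rewrite (@eq_fsum _ _ _ _ (fun J => if (I `<=` J)%fset then F I J else 0)); last first.
  by move=> J /imfsetP [A /= _ ->]; rewrite fsubsetUl.
apply: big_fset_incl.
  apply/fsubsetP => J /imfsetP [A]; rewrite /= fpowersetE => AK ->.
  by rewrite fpowersetE fsubUset IK /=; apply: fsubset_trans AK _; exact: fsubsetDl.
move=> J; rewrite fpowersetE => JK JN; case: ifP => // IJ.
exfalso; move/negP: JN; apply; apply/imfsetP; exists (J `\` I)%fset.
  by rewrite /= fpowersetE; apply: fsetSD.
by rewrite fsetUDK.
Qed.

Section GrassmannAction.
Variables (R : comPzRingType) (M : lmodType R).
Implicit Types (x y : {fset nat} -> M) (s t u : {fset nat} -> R).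

Lemma sup_addE x y : sup_add x y = x + y. Proof. by []. Qed.
Lemma sup_subE x y : sup_sub x y = x - y. Proof. by []. Qed.

Lemma sup_actDl x y t : sup_act (x + y) t = sup_act x t + sup_act y t.
Proof.
apply/funext => K; rewrite /sup_act !addrfctE -big_split /=.
by apply: eq_bigr => I _; rewrite scalerDr.
Qed.

Lemma sup_actNl x t : sup_act (- x) t = - sup_act x t.
Proof.
apply/funext => K; rewrite /sup_act !opprfctE -sumrN.
by apply: eq_bigr => I _; rewrite scalerN.
Qed.

Lemma sup_actBl x y t : sup_act (x - y) t = sup_act x t - sup_act y t.
Proof. by rewrite sup_actDl sup_actNl. Qed.

Lemma sup_actDr x s t : sup_act x (s + t) = sup_act x s + sup_act x t.
Proof.
apply/funext => K; rewrite /sup_act !addrfctE -big_split /=.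
by apply: eq_bigr => I _; rewrite mulrDr scalerDl.
Qed.

Lemma sup_act0l t : sup_act 0 t = 0 :> ({fset nat} -> M).
Proof. by apply/funext => K; rewrite /sup_act big1 // => I _; rewrite scaler0. Qed.

Lemma sup_act0r x : sup_act x 0 = 0.
Proof. by apply/funext => K; rewrite /sup_act big1 // => I _; rewrite mulr0 scale0r. Qed.

Lemma lam_mul0l u : lam_mul 0 u = 0.
Proof. by apply/funext => K; rewrite /lam_mul big1 // => I _; rewrite mulr0 mul0r. Qed.

Lemma lam_mul1l u : lam_mul (lam_emb 1) u = u.
Proof.
apply/funext => K; rewrite /lam_mul (big_fsetD1 fset0) ?fpowersetE ?fsub0set //=.
rewrite big1_fset ?addr0; last first.
  by move=> I; rewrite !inE => /andP[/negbTE h _] _; rewrite /lam_emb h mulr0 mul0r.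
by rewrite /lam_emb eqxx inv_count0l expr0 !mul1r fsetD0.
Qed.

Lemma sup_act_lam_emb x (t : R) : sup_act x (lam_emb t) = t *: x.
Proof.
apply/funext => K; rewrite /sup_act scalrfctE (big_fsetD1 K) ?fpowersetE //=.
rewrite big1_fset ?addr0; last first.
  move=> I; rewrite !inE fpowersetE => /andP[nIK IK] _; rewrite /lam_emb fsetD_eq0.
  have -> : (K `<=` I)%fset = false.
    by apply/negbTE; apply: contra nIK => KI; rewrite eqEfsubset IK KI.
  by rewrite mulr0 scale0r.
by rewrite fsetDv /lam_emb eqxx /inv_count big1_seq ?expr0 ?mul1r // => i _; rewrite /= count_pred0.
Qed.

Lemma supported_below_act N x t : supported_below N x -> supported_below N t ->
  supported_below N (sup_act x t).
Proof.
move=> hx ht K [i iK Ni]; rewrite /sup_act big1_fset // => I; rewrite fpowersetE => IK _.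
case: (boolP (i \in I)) => iI; first by rewrite hx ?scaler0 //; exists i.
by rewrite ht ?mulr0 ?scale0r //; exists i; rewrite // in_fsetD iI iK.
Qed.

Lemma supported_below_lam_mul N s t : supported_below N s -> supported_below N t ->
  supported_below N (lam_mul s t).
Proof.
move=> hs ht K [i iK Ni]; rewrite /lam_mul big1_fset // => I; rewrite fpowersetE => IK _.
case: (boolP (i \in I)) => iI; first by rewrite hs ?mulr0 ?mul0r //; exists i.
by rewrite ht ?mulr0 //; exists i; rewrite // in_fsetD iI iK.
Qed.

Lemma sup_fin_act x t : sup_fin x -> lam_fin t -> sup_fin (sup_act x t).
Proof.
move=> [N hx] [N' ht]; exists (maxn N N'); apply: supported_below_act.
  exact: supported_below_maxl. exact: supported_below_maxr.
Qed.

Lemma lam_fin_mul s t : lam_fin s -> lam_fin t -> lam_fin (lam_mul s t).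
Proof.
move=> [N hs] [N' ht]; exists (maxn N N'); apply: supported_below_lam_mul.
  exact: supported_below_maxl. exact: supported_below_maxr.
Qed.

Lemma theta_divisible_act q x u : theta_divisible q u -> theta_divisible q (sup_act x u).
Proof.
move=> hu K qK; rewrite /sup_act big1_fset // => I _ _.
by rewrite hu ?mulr0 ?scale0r // in_fsetD (negbTE qK) andbF.
Qed.

Lemma theta_divisible_mulr q s u : theta_divisible q u -> theta_divisible q (lam_mul s u).
Proof.
move=> hu K qK; rewrite /lam_mul big1_fset // => I _ _.
by rewrite hu ?mulr0 // in_fsetD (negbTE qK) andbF.
Qed.

Lemma theta_divisible_mull q s u : theta_divisible q s -> theta_divisible q (lam_mul s u).
Proof.
move=> hs K qK; rewrite /lam_mul big1_fset // => I; rewrite fpowersetE => IK _.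
by rewrite hs ?mulr0 ?mul0r //; apply: contra qK; exact: (fsubsetP IK).
Qed.

(* [theta _ q] squares to zero *)
Lemma sup_act_theta_divisible q x u :
  theta_divisible q x -> theta_divisible q u -> sup_act x u = 0.
Proof.
move=> hx hu; apply/funext => K; rewrite /sup_act big1_fset // => I _ _.
case: (boolP (q \in I)) => qI; last by rewrite hx ?scaler0.
by rewrite hu ?mulr0 ?scale0r // in_fsetD qI.
Qed.

Lemma sup_act_theta_coef x q (I : {fset nat}) : {in I, forall i, (i < q)%N} ->
  sup_act x (theta R q) (q |` I)%fset = x I.
Proof.
move=> ltIq; have qI : q \notin I by apply/negP => /ltIq; rewrite ltnn.
rewrite /sup_act (big_fsetD1 I) ?fpowersetE ?fsubsetU1 //=.
have -> : ((q |` I) `\` I)%fset = [fset q]%fset.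
  apply/fsetP => z; rewrite !inE; case: (eqVneq z q) => [->|] /=; first by rewrite qI.
  by case: (z \in I).
rewrite big1_fset ?addr0; last first.
  move=> J; rewrite !inE fpowersetE => /andP[nJI JqI] _; rewrite /theta.
  case: eqP => [Dq|]; last by rewrite mulr0 scale0r.
  case/negP: nJI; apply/eqP/fsetP => z; move/fsetP/(_ z): Dq; rewrite !inE.
  case: (eqVneq z q) => [->|zq] /=.
    by rewrite andbT (negbTE qI) => /negbTE.
  move=> Dz; apply/idP/idP => [zJ|zI].
    by have := fsubsetP JqI z zJ; rewrite !inE (negbTE zq).
  by apply/negPn/negP => zJ; move: Dz; rewrite zJ zI.
rewrite /theta eqxx mulr1 /inv_count big1_seq ?expr0 ?scale1r // => i /andP[_ iI].
apply/eqP; rewrite eqn0Ngt -has_count; apply/hasPn => j.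
by rewrite inE => /eqP ->; rewrite -leqNgt ltnW ?ltIq.
Qed.

Lemma sup_act_theta_cancel N q x : supported_below N x -> (N <= q)%N ->
  sup_act x (theta R q) = 0 -> x = 0.
Proof.
move=> hx Nq hxq; apply/funext => I.
case: (pselect (exists2 i, i \in I & (N <= i)%N)) => [hI|hI]; first by rewrite hx.
have ltIq : {in I, forall i, (i < q)%N}.
  by move=> i iI; rewrite ltnNge; apply/negP => qi; apply: hI; exists i => //; exact: leq_trans qi.
by rewrite -(sup_act_theta_coef x ltIq) hxq.
Qed.

Lemma sup_act_assoc x s t : sup_act (sup_act x s) t = sup_act x (lam_mul s t).
Proof.
apply/funext => K; rewrite /sup_act /lam_mul.
under eq_fsum => J _ do rewrite scaler_sumr.
rewrite exchange_sum_fpowerset; apply: eq_fsum => I; rewrite fpowersetE => IK.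
rewrite mulr_sumr scaler_suml; apply: eq_fsum => A; rewrite fpowersetE => AK.
have dIA : [disjoint I & A]%fset.
  by rewrite fdisjoint_sym; move: AK; rewrite fsubsetD => /andP[].
have dAB : [disjoint A & ((K `\` I) `\` A)]%fset.
  by apply/fdisjointP => z zA; rewrite in_fsetD zA.
rewrite scalerA fsetUKD // -fsetDDl; congr (_ *: _).
set B := ((K `\` I) `\` A)%fset.
rewrite inv_countUl // -(fsetUDK AK) inv_countUr // !exprD.
by ring.
Qed.

Lemma sup_embD (e e' : M) : sup_emb (e + e') = sup_emb e + sup_emb e'.
Proof. by apply/funext => I; rewrite addrfctE /sup_emb; case: ifP; rewrite ?addr0. Qed.

Lemma sup_embZ (t : R) (e : M) : sup_emb (t *: e) = t *: sup_emb e.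
Proof. by apply/funext => I; rewrite scalrfctE /sup_emb; case: ifP; rewrite ?scaler0. Qed.

Lemma sup_emb_ground (e : M) : sup_ground (sup_emb e).
Proof. by move=> I /negbTE I0; rewrite /sup_emb I0. Qed.

Lemma sup_groundE x : sup_ground x -> x = sup_emb (sup_body x).
Proof. by move=> h; apply/funext => I; rewrite /sup_emb /sup_body; case: eqP => [->|/eqP/h]. Qed.

Lemma lam_emb0 : lam_emb 0 = 0 :> ({fset nat} -> R).
Proof. by apply/funext => I; rewrite /lam_emb; case: ifP. Qed.

Lemma sup_body_emb (e : M) : sup_body (sup_emb e) = e.
Proof. by rewrite /sup_body /sup_emb eqxx. Qed.

End GrassmannAction.

Section Parity.
Variables (R : comPzRingType) (M0 M1 : lmodType R).
Implicit Types (y z : {fset nat} -> M0 * M1) (s t : {fset nat} -> R) (b c : bool).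

Lemma pair_addE (a b : M0) (c d : M1) : (a, c) + (b, d) = (a + b, c + d) :> M0 * M1.
Proof. by []. Qed.

Definition sup_homog b y := forall I : {fset nat},
  if odd #|` I| (+) b then (y I).1 = 0 else (y I).2 = 0.
Definition lam_homog b s := forall I : {fset nat}, odd #|` I| != b -> s I = 0.

Definition sup_part b y : {fset nat} -> M0 * M1 := fun I =>
  if odd #|` I| (+) b then (0, (y I).2) else ((y I).1, 0).
Definition lam_part b s : {fset nat} -> R := fun I => if odd #|` I| == b then s I else 0.

Lemma sup_even_homog y : sup_even y <-> sup_homog false y.
Proof. by split => h I; have := h I; rewrite addbF. Qed.

Lemma sup_homog_part b y : sup_homog b (sup_part b y).
Proof. by move=> I; rewrite /sup_part; case: (odd _ (+) b). Qed.

Lemma sup_part_sum y : sup_part false y + sup_part true y = y.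
Proof.
apply/funext => I; rewrite addrfctE /sup_part addbF addbT.
by case: (odd _); case: (y I) => a c; rewrite pair_addE ?add0r ?addr0.
Qed.

Lemma sup_part_id b y : sup_homog b y -> sup_part b y = y.
Proof.
move=> h; apply/funext => I; move: (h I); rewrite /sup_part.
by case: (odd _ (+) b); case: (y I) => a c /= ->.
Qed.

Lemma sup_part0 b y : sup_homog (~~ b) y -> sup_part b y = 0.
Proof.
move=> h; apply/funext => I; move: (h I); rewrite /sup_part addbN.
by case: (odd _ (+) b) => /= ->.
Qed.

Lemma sup_partD b y z : sup_part b (y + z) = sup_part b y + sup_part b z.
Proof.
by apply/funext => I; rewrite !addrfctE /sup_part; case: ifP => _; rewrite pair_addE ?addr0.
Qed.

Lemma sup_fin_part b y : sup_fin y -> sup_fin (sup_part b y).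
Proof. by case=> N h; exists N => I hI; rewrite /sup_part h //; case: ifP. Qed.

Lemma lam_homog_part b s : lam_homog b (lam_part b s).
Proof. by move=> I /negbTE h; rewrite /lam_part h. Qed.

Lemma lam_part_sum s : lam_part false s + lam_part true s = s.
Proof. by apply/funext => I; rewrite addrfctE /lam_part; case: (odd _); rewrite ?add0r ?addr0. Qed.

Lemma lam_fin_part b s : lam_fin s -> lam_fin (lam_part b s).
Proof. by case=> N h; exists N => I hI; rewrite /lam_part h //; case: ifP. Qed.

Lemma sup_homog0 b : sup_homog b 0.
Proof. by move=> I; case: ifP. Qed.

Lemma sup_homogD b y z : sup_homog b y -> sup_homog b z -> sup_homog b (y + z).
Proof.
move=> hy hz I; move: (hy I) (hz I); rewrite addrfctE.
by case: ifP => _ /= -> ->; rewrite addr0.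
Qed.

Lemma sup_homogB b y z : sup_homog b y -> sup_homog b z -> sup_homog b (y - z).
Proof.
move=> hy hz I; move: (hy I) (hz I); rewrite addrfctE opprfctE.
by case: ifP => _ /= -> ->; rewrite subr0.
Qed.

Lemma odd_cardfsD (I K : {fset nat}) : (I `<=` K)%fset ->
  odd #|` (K `\` I)%fset| = odd #|` K| (+) odd #|` I|.
Proof. by move=> IK; rewrite cardfsDS // oddB // fsubset_leq_card. Qed.

Lemma sup_homog_act b c y s : sup_homog b y -> lam_homog c s ->
  sup_homog (b (+) c) (sup_act y s).
Proof.
move=> hy hs K; rewrite /sup_act.
case: ifP => HK; rewrite raddf_sum big1_fset // => I; rewrite fpowersetE => IK _ /=;
  (case: (eqVneq (odd #|` (K `\` I)%fset|) c) => Hc; last by rewrite hs ?mulr0 ?scale0r);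
  move: (hy I) HK; rewrite -Hc odd_cardfsD //; clear hy hs;
  by case: (odd #|` I|); case: (odd #|` K|); case: b => //= -> _; rewrite scaler0.
Qed.

Lemma lam_homog_mul b c s t : lam_homog b s -> lam_homog c t -> lam_homog (b (+) c) (lam_mul s t).
Proof.
move=> hs ht K HK; rewrite /lam_mul big1_fset // => I; rewrite fpowersetE => IK _.
case: (eqVneq (odd #|` (K `\` I)%fset|) c) => Hc; last by rewrite ht ?mulr0.
rewrite hs ?mulr0 ?mul0r //; move: HK; rewrite -Hc odd_cardfsD //; clear hs ht.
by case: (odd #|` I|); case: (odd #|` K|); case: b.
Qed.

Lemma theta_homog q : lam_homog true (theta R q).
Proof. by move=> I; rewrite /theta; case: ifP => // /eqP ->; rewrite cardfs1. Qed.

Lemma sup_homog_theta_cancel b N q y : supported_below N y -> (N <= q)%N ->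
  sup_homog b (sup_act y (theta R q)) -> sup_homog (~~ b) y.
Proof.
move=> hy Nq hyq I.
case: (pselect (exists2 i, i \in I & (N <= i)%N)) => [hI|hI].
  by rewrite hy //; case: ifP.
have ltIq : {in I, forall i, (i < q)%N}.
  by move=> i iI; rewrite ltnNge; apply/negP => qi; apply: hI; exists i => //; exact: leq_trans qi.
have qI : q \notin I by apply/negP => /ltIq; rewrite ltnn.
by move: (hyq (q |` I)%fset); rewrite sup_act_theta_coef // cardfsU1 qI /= addNb addbN.
Qed.

Lemma sup_homog_emb (e : M0) : sup_homog false (sup_emb (e, 0)).
Proof.
by move=> I; rewrite addbF /sup_emb; case: eqP => [->|_]; rewrite ?cardfs0 //; case: ifP.
Qed.

End Parity.

(* Multiplying an identity by this monomial and cancelling it again (theta_probe_cancel)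
   is how additivity and linearity of [tdiff] are obtained. *)
Definition theta_probe (R : pzRingType) (b : bool) (q : nat) : {fset nat} -> R :=
  if b then theta R q else lam_mul (theta R q) (theta R q.+1).

Section ThetaProbe.
Variables (R : comPzRingType).

Lemma theta_probe_fin b q : lam_fin (theta_probe R b q).
Proof. by case: b; [exact: theta_fin | exact: lam_fin_mul (theta_fin _ _) (theta_fin _ _)]. Qed.

Lemma theta_probe_divisible b q : theta_divisible q (theta_probe R b q).
Proof.
by case: b; rewrite /theta_probe; [|apply: theta_divisible_mull]; exact: theta_divisible_theta.
Qed.

Lemma theta_probe_homog b q : lam_homog b (theta_probe R b q).
Proof.
case: b; first exact: theta_homog.
exact: (lam_homog_mul (theta_homog R q) (theta_homog R q.+1)).
Qed.

Lemma sup_act_theta_supported_below (M : lmodType R) N q (Y : {fset nat} -> M) :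
  supported_below N Y -> (N <= q)%N -> supported_below q.+1 (sup_act Y (theta R q)).
Proof.
move=> hY Nq; have hY1 : supported_below q.+1 Y.
  by move=> I [i iI qi]; apply: hY; exists i => //; apply: leq_trans qi; rewrite ltnW // ltnS.
exact: supported_below_act hY1 (@theta_supported_below R q).
Qed.

Lemma theta_probe_cancel (M : lmodType R) (Y : {fset nat} -> M) N q b :
  supported_below N Y -> (N <= q)%N -> sup_act Y (theta_probe R b q) = 0 -> Y = 0.
Proof.
move=> hY Nq; rewrite /theta_probe; case: b; first exact: sup_act_theta_cancel hY Nq.
rewrite -sup_act_assoc => hYq.
apply: (sup_act_theta_cancel hY Nq).
exact: sup_act_theta_cancel (sup_act_theta_supported_below hY Nq) (leqnn _) hYq.
Qed.

Lemma theta_probe_parity (M0 M1 : lmodType R) (Y : {fset nat} -> M0 * M1) N q b c :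
  supported_below N Y -> (N <= q)%N ->
  sup_homog c (sup_act Y (theta_probe R b q)) -> sup_homog (c (+) b) Y.
Proof.
move=> hY Nq; rewrite /theta_probe; case: b => [|hYq].
  by rewrite addbT; exact: sup_homog_theta_cancel hY Nq.
rewrite -sup_act_assoc in hYq.
have := sup_homog_theta_cancel (sup_act_theta_supported_below hY Nq) (leqnn _) hYq.
by move/(sup_homog_theta_cancel hY Nq); rewrite negbK addbF.
Qed.

End ThetaProbe.

Lemma within_continuous_mapsto_comp (X Y Z : topologicalType) (A : set X) (B : set Y)
  (phi : X -> Y) (g : Y -> Z) :
  continuous phi -> (forall x, A x -> B (phi x)) -> {within B, continuous g} ->
  {within A, continuous (g \o phi)}.
Proof.
move=> cphi AB /subspace_continuousP cg; apply/subspace_continuousP => x Ax.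
apply: (cvg_comp _ _ _ (cg _ (AB _ Ax))).
move=> S /=; rewrite /within /= => hS.
have := cphi x _ hS; rewrite nbhs_simpl /= => h.
by apply: filterS h => z hz Az; apply: hz; apply: AB.
Qed.

Lemma within_continuous_comp_initial (Y : choiceType) (X Z : topologicalType) (w : Y -> Z)
  (A : set X) (h : X -> initial_topology w) :
  {within A, continuous (w \o h)} -> {within A, continuous h}.
Proof. by move=> c; apply: (@continuous_comp_initial Y (subspace A) Z w (from_subspace A h)). Qed.

Lemma within_continuous_initial_body (Y : choiceType) (X Z : topologicalType) (w : Y -> Z)
  (A : set X) (h : X -> initial_topology w) :
  {within A, continuous h} -> {within A, continuous (w \o h)}.
Proof. by move=> c x; apply: continuous_comp; [exact: c | exact: initial_continuous]. Qed.

Lemma within_continuous2 (X Y : topologicalType) (op : Y -> Y -> Y) (A : set X) (a b : X -> Y) :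
  continuous (fun p : Y * Y => op p.1 p.2) ->
  {within A, continuous a} -> {within A, continuous b} ->
  {within A, continuous (fun x => op (a x) (b x))}.
Proof.
move=> cop ca cb x.
apply: (@continuous2_cvg _ _ _ _ _ _ (from_subspace A a) (from_subspace A b) op);
  [exact: (cop (a x, b x)) | exact: ca | exact: cb].
Qed.

Lemma continuous_pair (X Y Z : topologicalType) (a : X -> Y) (b : X -> Z) :
  continuous a -> continuous b -> continuous (fun x => (a x, b x)).
Proof. by move=> ca cb x; apply: cvg_pair; [exact: ca | exact: cb]. Qed.

Lemma continuous_fst (X Y : topologicalType) : continuous (@fst X Y).
Proof. by move=> z; exact: cvg_fst. Qed.

Lemma continuous_snd (X Y : topologicalType) : continuous (@snd X Y).
Proof. by move=> z; exact: cvg_snd. Qed.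

Lemma continuousT_comp (X Y Z : topologicalType) (f : X -> Y) (g : Y -> Z) :
  continuous f -> continuous g -> continuous (g \o f).
Proof. by move=> cf cg x; apply: continuous_comp; [exact: cf | exact: cg]. Qed.

Section TuynmanC2.
Variables (R : TopComUnitRing.type) (E0 E1 F0 F1 : TopLmod.type R).
Local Notation E := (E0 * E1)%type.
Local Notation F := (F0 * F1)%type.
Local Notation P3 := (scar (sspP3 (sspE E))).
Variables (U : set ({fset nat} -> E)) (f : ({fset nat} -> E) -> {fset nat} -> F) (O : set E0).
Hypothesis HU : U = [set x | [/\ sup_even x, sup_fin x & O (sup_body x).1]].
Hypothesis f_even : forall x, U x -> sup_even (f x).
Local Notation V1U := (@V1 R (sspE E) U).
Variable g1 : P3 -> {fset nat} -> F.
Hypothesis eq1 : forall y : P3, V1U y ->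
  sup_sub (f (sadd y.1.1 (sact y.1.2 y.2))) (f y.1.1) = sup_act (g1 y) y.2.
Hypothesis g1_fin : forall y : P3, V1U y -> sup_fin (g1 y).
Variable g2 : scar (sspP3 (sspP3 (sspE E))) -> {fset nat} -> F.
Hypothesis eq2 : forall y, @V1 R (sspP3 (sspE E)) V1U y ->
  sup_sub (g1 (sadd y.1.1 (sact y.1.2 y.2))) (g1 y.1.1) = sup_act (g2 y) y.2.

Lemma f_increment x v t : V1U (x, v, t) -> f (x + sup_act v t) - f x = sup_act (g1 (x, v, t)) t.
Proof. exact: (eq1 (y := (x, v, t))). Qed.

Lemma U_translate b q x v u : U x -> sup_fin v -> lam_fin u -> theta_divisible q u ->
  sup_homog b v -> lam_homog b u -> U (x + sup_act v u).
Proof.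
rewrite HU => -[ex fx Ox] fv fu qu hv hu; split.
- apply/sup_even_homog; apply: sup_homogD; first exact/sup_even_homog.
  by have := sup_homog_act hv hu; rewrite addbb.
- exact: fin_suppD fx (sup_fin_act fv fu).
- have -> : sup_body (x + sup_act v u) = sup_body x.
    by rewrite /sup_body addrfctE /= (theta_divisible_act _ qu) ?inE ?addr0.
  exact: Ox.
Qed.

Lemma V1U_zero x v : U x -> sup_fin v -> V1U (x, v, 0).
Proof. by move=> Ux fv; split => //; [exact: fin_supp0 | rewrite /= sup_addE sup_act0r addr0]. Qed.

(* The second-order term g2 gets multiplied by [s] twice, and [s * s = 0]. *)
Lemma g1_act_shift q x v t x' v' t' s :
  V1U (x, v, t) -> sup_fin x' -> sup_fin v' -> lam_fin t' -> lam_fin s -> theta_divisible q s ->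
  V1U (x + sup_act x' s, v + sup_act v' s, t + lam_mul t' s) ->
  sup_act (g1 (x + sup_act x' s, v + sup_act v' s, t + lam_mul t' s)) s =
  sup_act (g1 (x, v, t)) s.
Proof.
move=> Vy fx' fv' ft' fs qs Vz.
have := eq2 (y := ((x, v, t), (x', v', t'), s)) (And4 Vy (And3 fx' fv' ft') fs Vz).
rewrite sup_subE => /eqP; rewrite subr_eq => /eqP /= ->.
by rewrite sup_actDl (sup_act_theta_divisible (theta_divisible_act _ qs) qs) add0r.
Qed.

Definition tdiff (x v : {fset nat} -> E) : {fset nat} -> F := g1 (x, v, 0).

Lemma f_increment_divisible q x v u : U x -> sup_fin v -> lam_fin u -> theta_divisible q u ->
  U (x + sup_act v u) -> f (x + sup_act v u) - f x = sup_act (tdiff x v) u.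
Proof.
move=> Ux fv fu qu Uxv; have Vxvu : V1U (x, v, u) by [].
rewrite f_increment //.
have := @g1_act_shift q x v 0 0 0 (lam_emb 1) u (V1U_zero Ux fv) (fin_supp0 _) (fin_supp0 _)
  (lam_emb_fin _) fu qu.
by rewrite !sup_act0l !addr0 lam_mul1l add0r => /(_ Vxvu).
Qed.

Lemma tdiff_fin x v : U x -> sup_fin v -> sup_fin (tdiff x v).
Proof. by move=> Ux fv; apply: g1_fin; exact: V1U_zero. Qed.

Lemma tdiff_homog b x v : U x -> sup_fin v -> sup_homog b v -> sup_homog b (tdiff x v).
Proof.
move=> Ux fv hv; have [N hN] := tdiff_fin Ux fv.
have fu : lam_fin (theta_probe R b N) by exact: theta_probe_fin.
have qu : theta_divisible N (theta_probe R b N) by exact: theta_probe_divisible.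
have hu : lam_homog b (theta_probe R b N) by exact: theta_probe_homog.
have Uxv := U_translate Ux fv fu qu hv hu.
have : sup_homog false (sup_act (tdiff x v) (theta_probe R b N)).
  rewrite -(f_increment_divisible Ux fv fu qu Uxv).
  by apply: sup_homogB; apply/sup_even_homog; apply: f_even.
by move/(theta_probe_parity hN (leqnn N)); rewrite addFb.
Qed.

Lemma tdiffD b x v w : U x -> sup_fin v -> sup_fin w -> sup_homog b v -> sup_homog b w ->
  tdiff x (v + w) = tdiff x v + tdiff x w.
Proof.
move=> Ux fv fw hv hw; have fvw := fin_suppD fv fw; have hvw := sup_homogD hv hw.
have [N hN] : sup_fin (tdiff x (v + w) - (tdiff x v + tdiff x w)).
  exact: fin_suppB (tdiff_fin Ux fvw) (fin_suppD (tdiff_fin Ux fv) (tdiff_fin Ux fw)).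
set u := theta_probe R b N.
have fu : lam_fin u by exact: theta_probe_fin.
have qu : theta_divisible N u by exact: theta_probe_divisible.
have hu : lam_homog b u by exact: theta_probe_homog.
have Ux' : U (x + sup_act v u) := U_translate Ux fv fu qu hv hu.
have Uxvw : U (x + sup_act (v + w) u) := U_translate Ux fvw fu qu hvw hu.
have e1 : (x + sup_act v u) + sup_act w u = x + sup_act (v + w) u.
  by rewrite -addrA -sup_actDl.
have Ux'w : U ((x + sup_act v u) + sup_act w u) by rewrite e1.
have tdiff_shift : sup_act (tdiff (x + sup_act v u) w) u = sup_act (tdiff x w) u.
  have := @g1_act_shift N x w 0 v 0 0 u (V1U_zero Ux fw) fv (fin_supp0 _) (fin_supp0 _) fu qu.
  by rewrite sup_act0l lam_mul0l !addr0 => /(_ (V1U_zero Ux' fw)).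
apply/eqP; rewrite -subr_eq0; apply/eqP; apply: (theta_probe_cancel (b := b) hN (leqnn N)).
rewrite -/u sup_actBl sup_actDl -(f_increment_divisible Ux fvw fu qu Uxvw).
rewrite -(f_increment_divisible Ux fv fu qu Ux') -tdiff_shift.
rewrite -(f_increment_divisible Ux' fw fu qu Ux'w) e1.
by rewrite [_ + (_ - _)]addrC subrKA subrr.
Qed.

Lemma tdiff0 x : U x -> tdiff x 0 = 0.
Proof.
move=> Ux; have := @tdiffD true x 0 0 Ux (fin_supp0 _) (fin_supp0 _)
  (sup_homog0 _ _ _) (sup_homog0 _ _ _).
by rewrite addr0 => /(congr1 (fun z => z - tdiff x 0)); rewrite subrr addrK.
Qed.

Lemma tdiff_act b c x v s : U x -> sup_fin v -> sup_homog b v -> lam_fin s -> lam_homog c s ->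
  tdiff x (sup_act v s) = sup_act (tdiff x v) s.
Proof.
move=> Ux fv hv fs hs; have fvs := sup_fin_act fv fs; have hvs := sup_homog_act hv hs.
have [N hN] : sup_fin (tdiff x (sup_act v s) - sup_act (tdiff x v) s).
  exact: fin_suppB (tdiff_fin Ux fvs) (sup_fin_act (tdiff_fin Ux fv) fs).
set u := theta_probe R (b (+) c) N.
have fu : lam_fin u by exact: theta_probe_fin.
have qu : theta_divisible N u by exact: theta_probe_divisible.
have hu : lam_homog (b (+) c) u by exact: theta_probe_homog.
have Uvsu := U_translate Ux fvs fu qu hvs hu.
have k1 := f_increment_divisible Ux fvs fu qu Uvsu.
rewrite sup_act_assoc in Uvsu k1.
have k2 := f_increment_divisible Ux fv (lam_fin_mul fs fu) (theta_divisible_mulr s qu) Uvsu.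
apply/eqP; rewrite -subr_eq0; apply/eqP.
apply: (theta_probe_cancel (b := b (+) c) hN (leqnn N)).
by rewrite -/u sup_actBl -k1 k2 sup_act_assoc subrr.
Qed.

Definition tderiv (p : ({fset nat} -> E) * ({fset nat} -> E)) : {fset nat} -> F :=
  tdiff p.1 (sup_part false p.2) + tdiff p.1 (sup_part true p.2).

Lemma tderiv_homog b x a : U x -> sup_homog b a -> tderiv (x, a) = tdiff x a.
Proof.
move=> Ux ha; rewrite /tderiv /=.
case: b ha => ha; rewrite (sup_part_id ha).
  by rewrite (sup_part0 (b := false) ha) tdiff0 // add0r.
by rewrite (sup_part0 (b := true) ha) tdiff0 // addr0.
Qed.

Lemma tderiv_fin x a : U x -> sup_fin a -> sup_fin (tderiv (x, a)).
Proof. by move=> Ux fa; apply: fin_suppD; apply: tdiff_fin => //; exact: sup_fin_part. Qed.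

Lemma tderiv_even x a : U x -> sup_fin a -> sup_even a -> sup_even (tderiv (x, a)).
Proof.
move=> Ux fa /sup_even_homog ea; apply/sup_even_homog.
by rewrite (tderiv_homog Ux ea); exact: tdiff_homog.
Qed.

Lemma tderivD x a a' : U x -> sup_fin a -> sup_fin a' ->
  tderiv (x, a + a') = tderiv (x, a) + tderiv (x, a').
Proof.
move=> Ux fa fa'; rewrite /tderiv /= !sup_partD.
rewrite (tdiffD (b := false) Ux) ?(tdiffD (b := true) Ux); first exact: addrACA.
all: by [exact: sup_fin_part | exact: sup_homog_part].
Qed.

Lemma tderiv_act x a t : U x -> sup_fin a -> lam_fin t ->
  tderiv (x, sup_act a t) = sup_act (tderiv (x, a)) t.
Proof.
move=> Ux fa ft.
have fin_ab b c : sup_fin (sup_act (sup_part b a) (lam_part c t)).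
  exact: sup_fin_act (sup_fin_part b fa) (lam_fin_part c ft).
have tderiv_ab b c : tderiv (x, sup_act (sup_part b a) (lam_part c t)) =
    sup_act (tdiff x (sup_part b a)) (lam_part c t).
  rewrite (tderiv_homog Ux (sup_homog_act (sup_homog_part b a) (lam_homog_part (b := c) t))).
  exact: tdiff_act Ux (sup_fin_part b fa) (sup_homog_part b a)
    (lam_fin_part c ft) (lam_homog_part (b := c) t).
rewrite -[in LHS](sup_part_sum a) -[t](lam_part_sum t) !(sup_actDl, sup_actDr).
rewrite !tderivD; first by congr (_ + _ + (_ + _)); exact: tderiv_ab.
all: try done; by repeat apply: fin_suppD; apply: fin_ab.
Qed.

Lemma tderiv_increment x p a : U x -> sup_fin a -> sup_even a ->
  (exists2 b, sup_fin b & a = sup_act b (theta R p)) ->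
  f (x + a) - f x = tderiv (x, a).
Proof.
move=> Ux fa /sup_even_homog ea [b fb ab].
have h0 : sup_homog true (sup_act (sup_part false b) (theta R p)).
  exact: sup_homog_act (sup_homog_part false b) (theta_homog R p).
have h1 : sup_homog false (sup_act (sup_part true b) (theta R p)).
  exact: sup_homog_act (sup_homog_part true b) (theta_homog R p).
have eb : a = sup_act (sup_part false b) (theta R p) + sup_act (sup_part true b) (theta R p).
  by rewrite ab -sup_actDl sup_part_sum.
have a1 : a = sup_act (sup_part true b) (theta R p).
  have := sup_part0 (b := true) ea.
  rewrite {1}eb sup_partD (sup_part_id h0) (sup_part0 (b := true) h1) addr0 => e0.
  by rewrite eb e0 add0r.
rewrite (tderiv_homog Ux ea) a1.
have fb1 := sup_fin_part true fb; have hb1 := sup_homog_part true b.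
rewrite (tdiff_act Ux fb1 hb1 (theta_fin R p) (theta_homog R p)).
apply: f_increment_divisible (@theta_divisible_theta R p) _ => //; first exact: theta_fin.
exact: U_translate Ux fb1 (theta_fin R p) (@theta_divisible_theta R p) hb1 (theta_homog R p).
Qed.

Hypothesis g1_ground : forall y : P3, V1U y -> sground y -> sup_ground (g1 y).

Local Notation UR := [set e : E0 | U (sup_emb ((e, 0) : E))].
Local Notation fR := (fun e : E0 => sup_body (f (sup_emb ((e, 0) : E)))).

Definition fR1 (y : E0 * E0 * R) : F :=
  sup_body (g1 (sup_emb ((y.1.1, 0) : E), sup_emb ((y.1.2, 0) : E), lam_emb y.2)).

Lemma tderiv_emb x v : UR x ->
  tderiv (sup_emb ((x, 0) : E), sup_emb ((v, 0) : E)) = sup_emb (fR1 (x, v, 0)).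
Proof.
move=> Ux; rewrite (tderiv_homog (b := false) Ux); last exact: sup_homog_emb.
rewrite /fR1 /= lam_emb0.
apply: sup_groundE; apply: g1_ground; first exact: V1U_zero (sup_emb_fin _).
by split; [exact: sup_emb_ground | exact: sup_emb_ground | move].
Qed.

Lemma sup_emb_translate (x v : E0) (t : R) :
  sup_emb ((x, 0) : E) + sup_act (sup_emb ((v, 0) : E)) (lam_emb t) = sup_emb ((x + t *: v, 0) : E).
Proof.
by rewrite sup_act_lam_emb -sup_embZ -sup_embD; congr sup_emb; rewrite pair_addE scaler0 addr0.
Qed.

Lemma V1U_emb x v t : UR x -> UR (x + t *: v) ->
  V1U (sup_emb ((x, 0) : E), sup_emb ((v, 0) : E), lam_emb t).
Proof.
move=> Ux Uxt; split => //=; first exact: sup_emb_fin; first exact: lam_emb_fin.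
by rewrite sup_addE sup_emb_translate.
Qed.

Lemma fR_increment x v t : UR x -> UR (x + t *: v) -> fR (x + t *: v) - fR x = t *: fR1 (x, v, t).
Proof.
move=> Ux Uxt; have := f_increment (V1U_emb Ux Uxt).
by rewrite sup_emb_translate sup_act_lam_emb => /(congr1 (@sup_body _ _)).
Qed.

Hypothesis f_cont : @DeWitt_continuous R (sspE E) F U f.
Hypothesis g1_cont : @DeWitt_continuous R (sspP3 (sspE E)) F V1U g1.
Hypothesis F_add_continuous : continuous (fun p : F * F => p.1 + p.2).

Definition dw_emb (e : E0) : initial_topology (@sbody R (sspE E)) := sup_emb ((e, 0) : E).

Lemma dw_emb_continuous : continuous dw_emb.
Proof.
apply: continuous_comp_initial.
have -> : @sbody R (sspE E) \o dw_emb = (fun e : E0 => ((e, 0) : E)).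
  by apply/funext => e; rewrite /= sup_body_emb.
by apply: continuous_pair => [e|e]; [exact: cvg_id | exact: cvg_cst].
Qed.

Lemma fR_continuous : {within UR, continuous fR}.
Proof.
apply: within_continuous_initial_body.
exact: within_continuous_mapsto_comp dw_emb_continuous (fun e h => h) f_cont.
Qed.

Definition dw_emb3 (y : E0 * E0 * R) : initial_topology (@sbody R (sspP3 (sspE E))) :=
  (sup_emb ((y.1.1, 0) : E), sup_emb ((y.1.2, 0) : E), lam_emb y.2).

Lemma dw_emb3_continuous : continuous dw_emb3.
Proof.
apply: continuous_comp_initial.
have -> : @sbody R (sspP3 (sspE E)) \o dw_emb3 =
    (fun y : E0 * E0 * R => (((y.1.1, 0) : E), ((y.1.2, 0) : E), y.2)).
  by apply/funext => y; rewrite /= !sup_body_emb /lam_emb eqxx.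
apply: continuous_pair; last exact: continuous_snd.
apply: continuous_pair; apply: continuous_pair; try by move=> y; exact: cvg_cst.
  exact: continuousT_comp (@continuous_fst _ _) (@continuous_fst _ _).
exact: continuousT_comp (@continuous_fst _ _) (@continuous_snd _ _).
Qed.

Lemma fR1_continuous :
  {within [set y : E0 * E0 * R | UR y.1.1 /\ UR (y.1.1 + y.2 *: y.1.2)], continuous fR1}.
Proof.
have := within_continuous_mapsto_comp (A := [set y | UR y.1.1 /\ UR (y.1.1 + y.2 *: y.1.2)])
  dw_emb3_continuous (fun y h => V1U_emb h.1 h.2) g1_cont.
exact: within_continuous_initial_body.
Qed.

Definition dw_part (b : bool)
    (p : initial_topology (@dwbody R E) * initial_topology (@dwbody R E)) :
  initial_topology (@sbody R (sspP3 (sspE E))) := (p.1, sup_part b p.2, 0).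

Lemma dw_part_continuous b : continuous (dw_part b).
Proof.
have dw_cont := @initial_continuous _ _ (@dwbody R E).
apply: continuous_comp_initial.
have -> : @sbody R (sspP3 (sspE E)) \o dw_part b =
    (fun p : initial_topology (@dwbody R E) * initial_topology (@dwbody R E) =>
     (dwbody p.1, (if b then (0, (dwbody p.2).2) else ((dwbody p.2).1, 0)) : E, (0 : R))).
  by apply/funext => p; rewrite /= /sup_part /sup_body cardfs0.
apply: continuous_pair; last by move=> p; exact: cvg_cst.
apply: continuous_pair; first exact: continuousT_comp (@continuous_fst _ _) dw_cont.
have body2_cont := continuousT_comp (@continuous_snd (initial_topology (@dwbody R E)) _) dw_cont.
case: b; apply: continuous_pair; try by move=> p; exact: cvg_cst.
  exact: continuousT_comp body2_cont (@continuous_snd _ _).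
exact: continuousT_comp body2_cont (@continuous_fst _ _).
Qed.

Lemma tderiv_continuous : DeWitt_continuous2 [set p | U p.1 /\ sup_fin p.2] tderiv.
Proof.
apply: within_continuous_comp_initial.
have part_V1U b p : [set p | U p.1 /\ sup_fin p.2] p -> V1U (dw_part b p).
  by case=> Up fp; apply: V1U_zero => //; exact: sup_fin_part.
have c0 := within_continuous_initial_body
  (within_continuous_mapsto_comp (@dw_part_continuous false) (part_V1U false) g1_cont).
have c1 := within_continuous_initial_body
  (within_continuous_mapsto_comp (@dw_part_continuous true) (part_V1U true) g1_cont).
exact: within_continuous2 F_add_continuous c0 c1.
Qed.

End TuynmanC2.

Theorem proposition4p2 (R : TopComUnitRing.type) (E0 E1 F0 F1 : TopLmod.type R)
  (U : set (Sinf (E0 * E1)%type)) (f : Sinf (E0 * E1)%type -> Sinf (F0 * F1)%type) :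
  topological_ring R -> hausdorff_space R -> Q_algebra R -> dense_units R ->
  locally_komega R ->
  topological_module (E0 * E1)%type -> locally_komega (E0 * E1)%type ->
  topological_module (F0 * F1)%type -> locally_komega (F0 * F1)%type ->
  (* U is a DeWitt-open subset of E_infty *)
  (exists O : set E0, open O /\
     U = [set x | [/\ sup_even x, sup_fin x & O (sup_body x).1]]) ->
  (* f is even *)
  (forall x, U x -> sup_even (f x)) ->
  (* f is Tuynman-C^2 *)
  @TuynmanC R (F0 * F1)%type 2 (sspE (E0 * E1)%type) U f ->
  let UR := [set e : E0 | U (sup_emb (e, 0))] in
  let fR := fun e : E0 => sup_body (f (sup_emb (e, 0))) in
  exists h1 : E0 * E0 * R -> (F0 * F1)%type,
    BGN_C1_with UR fR h1 /\
    exists f1 : Sinf (E0 * E1)%type * Sinf (E0 * E1)%type -> Sinf (F0 * F1)%type,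
      [/\ (* f1 extends df_R, where df_R(x)v = h1(x,v,0) *)
          (forall x v : E0, UR x ->
             f1 (sup_emb (x, 0), sup_emb (v, 0)) = sup_emb (h1 (x, v, 0))),
          (* f1 is DeWitt-continuous on U x E^infty *)
          @DeWitt_continuous2 R (E0 * E1)%type (F0 * F1)%type
            [set p | U p.1 /\ sup_fin p.2] f1,
          (* for x in U, f1(x) is even and lambda^infty-linear *)
          (forall x, U x ->
             [/\ (forall a, sup_fin a -> sup_fin (f1 (x, a))),
                 (forall a, sup_fin a -> sup_even a -> sup_even (f1 (x, a))),
                 (forall a b, sup_fin a -> sup_fin b ->
                   f1 (x, sup_add a b) = sup_add (f1 (x, a)) (f1 (x, b))) &
                 (forall a t, sup_fin a -> lam_fin t ->
                   f1 (x, sup_act a t) = sup_act (f1 (x, a)) t)]) &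
          (* f(x+a) - f(x) = f1(x)(a) for a in E(lambda^infty theta_p) *)
          (forall x (p : nat) a, U x -> sup_fin a -> sup_even a ->
             (exists2 b, sup_fin b & a = sup_act b (theta R p)) ->
             sup_sub (f (sup_add x a)) (f x) = f1 (x, a))].
Proof.
move=> _ _ _ _ _ _ _ [F_add_continuous _ _] _ [O [_ HU]] f_even
  [_ _ f_cont [g1 [eq1 [g1_fin g1_ground g1_cont [g2 [eq2 _]]]]]] UR fR.
exists (fR1 g1); split.
  split; [apply: fR_continuous | apply: fR1_continuous | move=> x v t Ux Uxt;
    apply: fR_increment]; eassumption.
exists (tderiv g1); split.
- by move=> x v Ux; apply: tderiv_emb; eassumption.
- by apply: tderiv_continuous; eassumption.
- move=> x Ux; split.
  + by move=> a fa; apply: tderiv_fin; eassumption.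
  + by move=> a fa ea; apply: tderiv_even; eassumption.
  + by move=> a b fa fb; apply: tderivD; eassumption.
  + by move=> a t fa ft; apply: tderiv_act; eassumption.
- by move=> x p a Ux fa ea hb; apply: tderiv_increment; eassumption.
Qed.
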